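(* Let $N=\ker\psi\subseteq G_3$. Then $\beta(N)\supseteq A_{12}$, the alternating group on the twelve edge positions.
   Context: The $3\times3\times3$ Rubik's cube consists of 8 corner cubelets (3 stickers each), 12 edge cubelets (2 stickers each) and 6 face-center cubelets. $G_3$ is the group of permutations of the 48 corner and edge stickers generated by the six moves $u_3,d_3,f_3,b_3,l_3,r_3$ rotating respectively the top, bottom, front, back, left, right layer of nine cubelets by $90^\circ$ clockwise as seen from outside facing that face. $G_2$ is the analogous group for the $2\times2\times2$ cube (8 corner cubelets, 24 stickers) with generators $u_2,\dots,r_2$, and $\psi:G_3\to G_2$ is the homomorphism with $u_3\mapsto u_2$, $d_3\mapsto d_2$, etc. (it records the action on corner stickers). $\beta:G_3\to S_{12}$ records the permutation of the 12 edge positions. *)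

From mathcomp Require Import all_boot fingroup perm alt.
Set Implicit Arguments. Unset Strict Implicit. Unset Printing Implicit Defensive.

(* Coordinates: 'I_3 with 0,1,2 standing for -1,0,+1.  Axes are also indexed
   by 'I_3: axis 0 = x (towards the right face), 1 = y (towards the up face),
   2 = z (towards the front face). *)
Definition lo : 'I_3 := @Ordinal 3 0 isT.
Definition mid : 'I_3 := @Ordinal 3 1 isT.
Definition hi : 'I_3 := @Ordinal 3 2 isT.
Definition neg (x : 'I_3) : 'I_3 := rev_ord x.

Definition vec := ('I_3 * 'I_3 * 'I_3)%type.
Definition get (v : vec) (i : 'I_3) : 'I_3 :=
  match nat_of_ord i with 0 => v.1.1 | 1 => v.1.2 | _ => v.2 end.
Definition mkv (f : 'I_3 -> 'I_3) : vec := (f lo, f mid, f hi).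
Definition nnz (v : vec) : nat := count (fun c => c != mid) [:: v.1.1; v.1.2; v.2].

(* rotation of space by +90 degrees (ccw = true, right-hand rule) or by
   -90 degrees (ccw = false) about the coordinate axis a:
   with (a, b, c) cyclic, +90 deg sends e_b to e_c and e_c to -e_b. *)
Definition rot (a : 'I_3) (ccw : bool) (v : vec) : vec :=
  mkv (fun i => let b := ordS a in let c := ordS b in
     if i == b then (if ccw then neg (get v c) else get v c)
     else if i == c then (if ccw then get v b else neg (get v b))
     else get v i).

(* A sticker: (position of its cubelet, outward unit normal of the sticker). *)
Definition sticker := (vec * vec)%type.

(* the 48 corner and edge stickers of the 3x3x3 cube: the normal is a unit
   coordinate vector pointing outward at a face of the cubelet lying on the
   surface, and the cubelet has at least two nonzero coordinates *)
Definition valid3 (x : sticker) : bool :=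
  [&& nnz x.2 == 1,
      all (fun i => (get x.2 i != mid) ==> (get x.1 i == get x.2 i)) [:: lo; mid; hi]
    & 1 < nnz x.1].
(* the 24 stickers of the 2x2x2 cube = the corner stickers *)
Definition valid2 (x : sticker) : bool := valid3 x && (nnz x.1 == 3).

(* quarter turn of the layer {x_a = s} (s = lo or hi), clockwise as seen from
   outside facing that face (s = hi : -90 deg about +e_a;
   s = lo : +90 deg about +e_a, i.e. -90 deg about -e_a) *)
Definition turn (a s : 'I_3) (x : sticker) : sticker :=
  if get x.1 a == s then (rot a (s != hi) x.1, rot a (s != hi) x.2) else x.
Definition unturn (a s : 'I_3) (x : sticker) : sticker :=
  if get x.1 a == s then (rot a (s == hi) x.1, rot a (s == hi) x.2) else x.

Definition ordl : seq 'I_3 := [:: lo; mid; hi].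
Definition vecl : seq vec :=
  [seq (xy, z) | xy <- [seq (x, y) | x <- ordl, y <- ordl], z <- ordl].
Definition stl : seq sticker := [seq (p, n) | p <- vecl, n <- vecl].

Lemma mem_ordl (x : 'I_3) : x \in ordl.
Proof. by case: x => [[|[|[|m]]] H]. Qed.

Lemma mem_vecl (v : vec) : v \in vecl.
Proof.
case: v => [[x y] z].
by apply: (allpairs_f (fun xy z => (xy, z))); [apply: (allpairs_f pair)|];
  rewrite ?mem_ordl.
Qed.

Lemma mem_stl (x : sticker) : x \in stl.
Proof. by case: x => p n; apply: (allpairs_f pair); rewrite mem_vecl. Qed.

Lemma rot_check :
  all (fun a => all (fun c => all (fun v =>
        (get (rot a c v) a == get v a) && (rot a (~~ c) (rot a c v) == v))
     vecl) [:: true; false]) ordl.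
Proof. by vm_compute. Qed.

Lemma turn_check :
  all (fun a => all (fun s => all (fun x =>
      (valid3 (turn a s x) == valid3 x) && (valid2 (turn a s x) == valid2 x))
     stl) ordl) ordl.
Proof. by vm_compute. Qed.

Lemma rot_both a c v :
  (get (rot a c v) a = get v a) /\ (rot a (~~ c) (rot a c v) = v).
Proof.
move/allP: rot_check => /(_ a (mem_ordl a))/allP/(_ c) H.
have {H} /allP/(_ v (mem_vecl v))/andP[/eqP -> /eqP ->] // : all (fun v =>
        (get (rot a c v) a == get v a) && (rot a (~~ c) (rot a c v) == v)) vecl.
by apply: H; case: c.
Qed.

Lemma rotK a c v : rot a (~~ c) (rot a c v) = v.
Proof. by case: (rot_both a c v). Qed.

Lemma rotK' a c v : rot a c (rot a (~~ c) v) = v.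
Proof. by rewrite -{1}[c]negbK rotK. Qed.

Lemma rot_get a c v : get (rot a c v) a = get v a.
Proof. by case: (rot_both a c v). Qed.

Lemma turnK a s : cancel (turn a s) (unturn a s).
Proof.
move=> [p n]; rewrite /turn /unturn /=.
case: (eqVneq (get p a) s) => [E|N]; last by rewrite /= (negPf N).
by rewrite /= rot_get E eqxx !rotK'.
Qed.

Lemma turn_valid a s x :
  (valid3 (turn a s x) = valid3 x) /\ (valid2 (turn a s x) = valid2 x).
Proof.
move/allP: turn_check => /(_ a (mem_ordl a))/allP/(_ s (mem_ordl s))
  /allP/(_ x (mem_stl x))/andP[/eqP -> /eqP ->]; done.
Qed.

Definition St3 := {x : sticker | valid3 x}.
Definition St2 := {x : sticker | valid2 x}.

Definition turn3 a s (x : St3) : St3 :=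
  exist _ (turn a s (val x)) (etrans (proj1 (turn_valid a s (val x))) (valP x)).
Definition turn2 a s (x : St2) : St2 :=
  exist _ (turn a s (val x)) (etrans (proj2 (turn_valid a s (val x))) (valP x)).

Lemma turn3_inj a s : injective (turn3 a s).
Proof. by move=> x y /(congr1 val) /= /(can_inj (turnK a s)) /val_inj. Qed.
Lemma turn2_inj a s : injective (turn2 a s).
Proof. by move=> x y /(congr1 val) /= /(can_inj (turnK a s)) /val_inj. Qed.

Definition move3 a s : {perm St3} := perm (@turn3_inj a s).
Definition move2 a s : {perm St2} := perm (@turn2_inj a s).

(* faces: up = {y = +1}, down = {y = -1}, front = {z = +1}, back = {z = -1},
   left = {x = -1}, right = {x = +1} *)
Definition u3 := move3 mid hi.  Definition d3 := move3 mid lo.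
Definition f3 := move3 hi hi.   Definition b3 := move3 hi lo.
Definition l3 := move3 lo lo.   Definition r3 := move3 lo hi.
Definition u2 := move2 mid hi.  Definition d2 := move2 mid lo.
Definition f2 := move2 hi hi.   Definition b2 := move2 hi lo.
Definition l2 := move2 lo lo.   Definition r2 := move2 lo hi.

Definition G3 : {set {perm St3}} := <<[set u3; d3; f3; b3; l3; r3]>>%g.
Definition G2 : {set {perm St2}} := <<[set u2; d2; f2; b2; l2; r2]>>%g.

(* psi : G3 -> G2, the action on corner stickers (for g in G3 the function
   below is a permutation; the fallback 1 is never used on G3).  It is the
   homomorphism with u3 |-> u2, ..., r3 |-> r2. *)
Definition psi_fun (g : {perm St3}) (c : St2) : St2 :=
  if insub (val c) is Some x then odflt c (insub (val (g x))) else c.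
Definition psi (g : {perm St3}) : {perm St2} := insubd (1%g : {perm St2}) ([ffun c => psi_fun g c] : {ffun St2 -> St2}).

Definition EdgePos := {p : vec | nnz p == 2}.

Definition beta_fun (g : {perm St3}) (e : EdgePos) : EdgePos :=
  if [pick x : St3 | (val x).1 == val e] is Some x then odflt e (insub (val (g x)).1)
  else e.
Definition beta (g : {perm St3}) : {perm EdgePos} :=
  insubd (1%g : {perm EdgePos}) ([ffun e => beta_fun g e] : {ffun EdgePos -> EdgePos}).

Definition N : {set {perm St3}} := G3 :&: [set g | psi g == 1%g].

From Pilot Require Import Defs.
From mathcomp Require Import all_boot fingroup perm alt action morphism.
Set Implicit Arguments. Unset Strict Implicit. Unset Printing Implicit Defensive.

(* Elements of G3 fixing every corner sticker lie in N = ker psi, and their images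
   under beta form a subgroup normalised by beta(G3).  The speedcubers' U-permutation
   fixes the corners and induces a 3-cycle of edge positions; conjugating it by face
   turns transports this 3-cycle along the orbit of its ordered triple of edges, and a
   breadth-first search shows that this orbit contains every ordered triple of
   distinct edges.  Since 3-cycles generate the alternating group, beta(N) contains
   A_12. *)

Local Open Scope group_scope.

Definition cycle3 (T : finType) (x y z : T) : {perm T} := tperm x y * tperm y z.

Lemma cycle3J (T : finType) (x y z : T) s :
  cycle3 x y z ^ s = cycle3 (s x) (s y) (s z).
Proof. by rewrite conjMg !tpermJ. Qed.

Section AltGeneration.

Variables (T : finType) (H : {group {perm T}}).
Hypothesis cycle3H : forall x y z : T, x != y -> y != z -> x != z -> cycle3 x y z \in H.

Lemma cycle3_mem x y z : x != y -> y != z -> cycle3 x y z \in H.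
Proof.
move=> xy yz; have [<-|] := eqVneq x z; last exact: cycle3H.
by rewrite /cycle3 tpermC tperm2 group1.
Qed.

Lemma tperm_pair_mem a b c d : a != b -> c != d -> tperm a b * tperm c d \in H.
Proof.
move=> ab; have [<- bd|bc cd] := eqVneq b c; first exact: cycle3_mem.
have -> : tperm a b * tperm c d = cycle3 a b c * cycle3 b c d.
  by rewrite /cycle3 mulgA -(mulgA (tperm a b)) tperm2 mulg1.
by rewrite groupM ?cycle3_mem.
Qed.

Lemma Alt_sub_cycle3 : 'Alt_T \subset H.
Proof.
apply/subsetP => s; rewrite Alt_even; have [ts -> dts] := prod_tpermP s.
rewrite odd_perm_prod //; have [n] := ubnP (size ts).
elim: n ts dts => // n IH [|t1 [|t2 ts]] //=; first by rewrite big_nil group1.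
move=> /and3P[t1P t2P dts]; rewrite !ltnS negbK => size_ts even_ts.
by rewrite !big_cons mulgA groupM ?tperm_pair_mem ?IH ?(ltnW size_ts).
Qed.

End AltGeneration.

Section Exploration.

Variables (T L : eqType) (labels : seq L) (act : L -> T -> T).
Variables (same : rel T) (P : pred T).
Hypothesis actP : forall l x, l \in labels -> P x -> P (act l x).

(* [same] only prunes duplicates, so the search is sound whatever it is. *)
Definition fresh_images (seen frontier : seq T) : seq T :=
  foldr (fun x new => if has (same x) new || has (same x) seen then new else x :: new) [::]
    [seq act l x | l <- labels, x <- frontier].

Fixpoint explore (n : nat) (seen frontier : seq T) : seq T :=
  if n is n'.+1 then
    let new := fresh_images seen frontier in explore n' (new ++ seen) new
  else seen.

Lemma fresh_imagesP seen frontier : all P frontier -> all P (fresh_images seen frontier).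
Proof.
move=> /allP frontierP.
have : all P [seq act l x | l <- labels, x <- frontier].
  by apply/allP => _ /allpairsP[[l x] [/= l_in x_in ->]]; apply: actP (frontierP x x_in).
rewrite /fresh_images; elim: [seq _ | l <- _, x <- _] => //= y ys IH /andP[Py /IH].
by case: ifP => //= _ ->; rewrite Py.
Qed.

Lemma exploreP n seen frontier :
  all P seen -> all P frontier -> all P (explore n seen frontier).
Proof.
elim: n seen frontier => //= n IH seen frontier seenP /(fresh_imagesP seen) newP.
by apply: IH => //; rewrite all_cat newP.
Qed.

End Exploration.

Definition cubelet (x : St3) : vec := (val x).1.

Definition turn_pos (a s : 'I_3) (p : vec) : vec :=
  if get p a == s then Defs.rot a (s != hi) p else p.

Lemma cubelet_move3 a s x : cubelet (move3 a s x) = turn_pos a s (cubelet x).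
Proof. by rewrite /cubelet /move3 permE /turn3 /= /turn /turn_pos; case: ifP. Qed.

Lemma nnz_turn_pos a s p : nnz (turn_pos a s p) = nnz p.
Proof.
have : all (fun a => all (fun s => all (fun p =>
         nnz (turn_pos a s p) == nnz p) vecl) ordl) ordl by vm_compute.
by move/allP/(_ a (mem_ordl a))/allP/(_ s (mem_ordl s))/allP/(_ p (mem_vecl p))/eqP.
Qed.

Definition faces : seq ('I_3 * 'I_3) :=
  [:: (mid, hi); (mid, lo); (hi, hi); (hi, lo); (lo, lo); (lo, hi)].

Lemma G3_faces : G3 = <<[set:: [seq move3 f.1 f.2 | f <- faces]]>>.
Proof. by congr <<_>>; apply/setP => g; rewrite !inE /= -!orbA. Qed.

Canonical G3_group := Eval hnf in [group of G3].

Lemma move3_G3 f : f \in faces -> move3 f.1 f.2 \in G3.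
Proof.
by move=> f_in; rewrite G3_faces mem_gen // inE (map_f (fun f => move3 f.1 f.2)).
Qed.

Definition Cubewise : {set {perm St3}} :=
  [set g : {perm St3} |
    [forall x, forall y, (cubelet x == cubelet y) ==> (cubelet (g x) == cubelet (g y))]
    & [forall x, nnz (cubelet (g x)) == nnz (cubelet x)]].

Lemma CubewiseP (g : {perm St3}) : reflect
  ((forall x y, cubelet x = cubelet y -> cubelet (g x) = cubelet (g y))
   /\ (forall x, nnz (cubelet (g x)) = nnz (cubelet x)))
  (g \in Cubewise).
Proof.
rewrite inE; apply: (iffP andP) => [[/forallP blocks /forallP kinds] | [blocks kinds]].
  split=> [x y /eqP xy | x]; last exact/eqP.
  by move/forallP/(_ y)/implyP/(_ xy)/eqP: (blocks x).
split; apply/forallP => x; last exact/eqP.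
by apply/forallP => y; apply/implyP => /eqP/blocks/eqP.
Qed.

Lemma group_set_Cubewise : group_set Cubewise.
Proof.
apply/group_setP; split; first by apply/CubewiseP; split=> *; rewrite !perm1.
move=> g h /CubewiseP[gB gK] /CubewiseP[hB hK]; apply/CubewiseP.
by split=> [x y xy | x]; rewrite !permM; [apply/hB/gB | rewrite hK gK].
Qed.
Canonical Cubewise_group := group group_set_Cubewise.

Lemma move3_Cubewise a s : move3 a s \in Cubewise.
Proof.
by apply/CubewiseP; split=> [x y xy | x]; rewrite !cubelet_move3 ?xy ?nnz_turn_pos.
Qed.

Lemma G3_Cubewise : G3 \subset Cubewise.
Proof.
rewrite G3_faces gen_subG; apply/subsetP => _ /[1!inE] /mapP[f _ ->].
exact: move3_Cubewise.
Qed.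

Lemma G3_cubelet g x y : g \in G3 -> cubelet x = cubelet y -> cubelet (g x) = cubelet (g y).
Proof. by move=> /(subsetP G3_Cubewise)/CubewiseP[blocks _]; apply: blocks. Qed.

Lemma G3_nnz g x : g \in G3 -> nnz (cubelet (g x)) = nnz (cubelet x).
Proof. by move=> /(subsetP G3_Cubewise)/CubewiseP[_ kinds]; apply: kinds. Qed.

Definition edge_normal (p : vec) : vec :=
  if p.1.1 != mid then (p.1.1, mid, mid)
  else if p.1.2 != mid then (mid, p.1.2, mid) else (mid, mid, p.2).

Lemma edge_sticker_valid (e : EdgePos) : valid3 (val e, edge_normal (val e)).
Proof.
have : all (fun p => (nnz p == 2) ==> valid3 (p, edge_normal p)) vecl by vm_compute.
by move/allP/(_ _ (mem_vecl (val e))); rewrite (valP e).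
Qed.

Definition edge_sticker (e : EdgePos) : St3 :=
  Sub (val e, edge_normal (val e)) (edge_sticker_valid e).

Lemma cubelet_edge_sticker e : cubelet (edge_sticker e) = val e.
Proof. by []. Qed.

Lemma beta_funE g e x : g \in G3 -> cubelet x = val e -> val (beta_fun g e) = cubelet (g x).
Proof.
move=> gG3 xe; rewrite /beta_fun; case: pickP => [y /eqP ye | no_sticker]; last first.
  by have := no_sticker x; rewrite -[(val x).1]/(cubelet x) xe eqxx.
have -> : (val (g y)).1 = cubelet (g x) by apply: G3_cubelet; rewrite // xe.
by rewrite -/(insubd e _) insubdK // -topredE /= (G3_nnz _ gG3) xe (valP e).
Qed.

Lemma betaE g e x : g \in G3 -> cubelet x = val e -> val (beta g e) = cubelet (g x).
Proof.
move=> gG3 xe; rewrite /beta -pvalE insubdK ?ffunE; first exact: beta_funE.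
apply/injectiveP => e1 e2; rewrite !ffunE => /(congr1 val).
rewrite !(beta_funE gG3 (cubelet_edge_sticker _)) => /(G3_cubelet (groupVr gG3)).
by rewrite !permK => /val_inj.
Qed.

Lemma betaM : {in G3 &, {morph beta : g h / g * h}}.
Proof.
move=> g h gG3 hG3; apply/permP => e; apply: val_inj; rewrite permM.
rewrite (betaE (groupM gG3 hG3) (cubelet_edge_sticker e)) permM.
by rewrite (betaE hG3 (esym (betaE gG3 (cubelet_edge_sticker e)))).
Qed.

Canonical beta_morphism := Morphism betaM.

(* [insub_eq] rather than [insub], which does not reduce under [vm_compute]. *)
Definition edge_turn (f : 'I_3 * 'I_3) (e : EdgePos) : EdgePos :=
  odflt e (@insub_eq _ _ EdgePos (turn_pos f.1 f.2 (val e))).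

Definition edges : seq EdgePos := pmap (@insub_eq _ _ EdgePos) vecl.

Lemma mem_edges e : e \in edges.
Proof. by rewrite /edges (eq_pmap (insub_eqE _)) mem_pmap_sub mem_vecl. Qed.

Lemma val_edge_turn f e : val (edge_turn f e) = turn_pos f.1 f.2 (val e).
Proof.
rewrite /edge_turn (insub_eqE _) -/(insubd e _) insubdK //.
by rewrite -topredE /= nnz_turn_pos (valP e).
Qed.

Lemma beta_move3 f e : f \in faces -> beta (move3 f.1 f.2) e = edge_turn f e.
Proof.
move=> f_in; apply: val_inj.
by rewrite (betaE (move3_G3 f_in) (cubelet_edge_sticker e)) cubelet_move3 val_edge_turn.
Qed.

Definition corners : {set St3} := [set x | nnz (cubelet x) == 3].

Definition fix_corners : {set {perm St3}} := G3 :&: 'C(corners | 'P).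

Lemma fix_corners_normal : fix_corners <| G3.
Proof.
apply: norm_normalI; apply: subset_trans (astab_norm _ _).
by apply/subsetP => g gG3; apply/astabsP => x; rewrite !inE /= (G3_nnz _ gG3).
Qed.

Lemma psi_fix_corners g : g \in 'C(corners | 'P) -> psi g = 1.
Proof.
move/astabP => fix_g; rewrite /psi.
have -> : [ffun c => psi_fun g c] = [ffun c : St2 => c].
  apply/ffunP => c; rewrite !ffunE /psi_fun.
  have /andP[c_valid /eqP c_corner] : valid2 (val c) := valP c.
  case: insubP => [x _ xc | ]; last by rewrite c_valid.
  by rewrite [g x]fix_g ?inE /cubelet ?xc ?c_corner // valK.
apply/permP => c; rewrite perm1 /psi -pvalE insubdK ?ffunE //.
by apply/injectiveP => c1 c2; rewrite !ffunE.
Qed.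

Lemma fix_corners_sub_N : fix_corners \subset N.
Proof.
apply/subsetP => g /setIP[gG3 g_fix]; apply/setIP; split => //.
by rewrite inE psi_fix_corners.
Qed.

Definition move_word (w : seq ('I_3 * 'I_3)) : {perm St3} :=
  foldr (fun f g => move3 f.1 f.2 * g) 1 w.

Lemma move_word_G3 w : all (mem faces) w -> move_word w \in G3.
Proof.
elim: w => [|f w IH] /=; first by rewrite group1.
by case/andP=> /move3_G3 f_G3 /IH w_G3; rewrite groupM.
Qed.

Lemma val_move_word w x : val (move_word w x) = foldl (fun x f => turn f.1 f.2 x) (val x) w.
Proof. by elim: w x => [|f w IH] x /=; rewrite ?perm1 // permM IH /move3 permE. Qed.

Lemma beta_move_word w e : all (mem faces) w ->
  beta (move_word w) e = foldl (fun e f => edge_turn f e) e w.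
Proof.
elim: w e => [|f w IH] e /=; first by rewrite morph1 perm1.
case/andP=> f_in w_faces; rewrite morphM ?move3_G3 ?move_word_G3 //.
by rewrite permM (beta_move3 _ f_in) IH.
Qed.

Definition face_R : 'I_3 * 'I_3 := (lo, hi).
Definition face_U : 'I_3 * 'I_3 := (mid, hi).

(* The speedcubers' U-permutation R2 U' R' U' R U R U R U' R. *)
Definition U_perm : seq ('I_3 * 'I_3) :=
  [:: face_R; face_R] ++ nseq 3 face_U ++ nseq 3 face_R ++ nseq 3 face_U
  ++ [:: face_R; face_U; face_R; face_U; face_R] ++ nseq 3 face_U ++ [:: face_R].

Definition UL : EdgePos := exist _ (lo, hi, mid) isT.
Definition UB : EdgePos := exist _ (mid, hi, lo) isT.
Definition UR : EdgePos := exist _ (hi, hi, mid) isT.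

Lemma U_perm_fix_corners : move_word U_perm \in fix_corners.
Proof.
have : all (fun x => (valid3 x && (nnz x.1 == 3)) ==>
         (foldl (fun x f => turn f.1 f.2 x) x U_perm == x)) stl by vm_compute.
move/allP => fixed; rewrite inE move_word_G3 //; apply/astabP => x.
rewrite inE => x_corner; change (move_word U_perm x = x).
apply: val_inj; rewrite val_move_word.
by apply/eqP; move: (fixed _ (mem_stl (val x))); rewrite (valP x) x_corner.
Qed.

Lemma beta_U_perm : beta (move_word U_perm) = cycle3 UL UB UR.
Proof.
have : all (fun e => foldl (fun e f => edge_turn f e) e U_perm ==
         [fun z => z with UB |-> UR, UR |-> UB] ([fun z => z with UL |-> UB, UB |-> UL] e))
       edges by vm_compute.
move/allP => cycled; apply/permP => e.
by rewrite beta_move_word // permM !permE; apply/eqP/cycled/mem_edges.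
Qed.

Definition triple := (EdgePos * EdgePos * EdgePos)%type.

Definition turn_triple f (t : triple) : triple :=
  (edge_turn f t.1.1, edge_turn f t.1.2, edge_turn f t.2).

(* Under [vm_compute] the generic [==] on [EdgePos] is far slower than this. *)
Definition same_edge (e e' : EdgePos) : bool :=
  let: exist (a, b, c) _ := e in let: exist (a', b', c') _ := e' in
  [&& eqn a a', eqn b b' & eqn c c'].

Definition same_triple (t t' : triple) : bool :=
  [&& same_edge t.1.1 t'.1.1, same_edge t.1.2 t'.1.2 & same_edge t.2 t'.2].

Lemma same_edgeE e e' : same_edge e e' = (e == e').
Proof.
case: e e' => [[[a b] c] ?] [[[a' b'] c'] ?].
by rewrite /same_edge -val_eqE /= !xpair_eqE -!val_eqE /= !eqnE andbA.
Qed.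

Lemma same_tripleE t t' : same_triple t t' = (t == t').
Proof.
by case: t t' => [[x y] z] [[x' y'] z']; rewrite /same_triple !same_edgeE !xpair_eqE andbA.
Qed.

Definition edge_triple_orbit : seq triple :=
  explore faces turn_triple same_triple 9 [:: (UL, UB, UR)] [:: (UL, UB, UR)].

Definition covers_edge_triples (O : seq triple) : bool :=
  all (fun x => all (fun y => all (fun z =>
    [&& x != y, y != z & x != z] ==> has (same_triple (x, y, z)) O) edges) edges) edges.

Lemma covers_edge_triplesP O x y z : covers_edge_triples O ->
  x != y -> y != z -> x != z -> (x, y, z) \in O.
Proof.
move=> /allP/(_ x (mem_edges x))/allP/(_ y (mem_edges y))/allP/(_ z (mem_edges z)).
move=> covered xy yz xz; move: covered; rewrite xy yz xz => /hasP[t t_in].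
by rewrite same_tripleE => /eqP->.
Qed.

Lemma edge_triple_orbit_covers : covers_edge_triples edge_triple_orbit.
Proof. by vm_compute. Qed.

Lemma cycle3_turn f x y z : f \in faces -> cycle3 x y z \in beta @* fix_corners ->
  cycle3 (edge_turn f x) (edge_turn f y) (edge_turn f z) \in beta @* fix_corners.
Proof.
move=> f_in c_in; rewrite -!beta_move3 // -cycle3J memJ_norm //.
have /normal_norm/subsetP -> // := morphim_normal beta_morphism fix_corners_normal.
by rewrite mem_morphim ?move3_G3.
Qed.

Lemma cycle3_beta_fix_corners x y z : x != y -> y != z -> x != z ->
  cycle3 x y z \in beta @* fix_corners.
Proof.
move=> xy yz xz.
have U_perm_mem : cycle3 UL UB UR \in beta @* fix_corners.
  by rewrite -beta_U_perm mem_morphim ?move_word_G3 ?U_perm_fix_corners.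
have orbitP : all (fun t : triple => cycle3 t.1.1 t.1.2 t.2 \in beta @* fix_corners)
                  edge_triple_orbit.
  by apply: exploreP => [f t|/=|/=]; [exact: cycle3_turn | rewrite U_perm_mem..].
exact: (allP orbitP) (covers_edge_triplesP edge_triple_orbit_covers xy yz xz).
Qed.

Theorem proposition3p2 : Alt EdgePos \subset [set beta g | g in N].
Proof.
apply: subset_trans (Alt_sub_cycle3 cycle3_beta_fix_corners) _.
by rewrite /= morphimEsub ?subsetIl // imsetS // fix_corners_sub_N.
Qed.
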